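(* Let $G=(V,E)$ be an atomic bispanning graph, $v\in V$ of degree $3$ with neighbours $x,y,z$ and incident edges $e_x,e_y,e_z$, let $(a,b)\in\{(x,y),(x,z),(y,z)\}$, $c$ the remaining neighbour, and $G_{a,b}$ the reduction graph. If $(f,e_{a,b},S,T)$ is an arc of $\vec\tau_3(G_{a,b})$, then there exists $e_2\in\{e_a,e_b\}$ such that (i) $(f,e_2,\rho_{e_{a,b},c}(S,T))$ is an arc of $\vec\tau_3(G)$, and (ii) $(e_2,f,S',T')$ is an arc of $\vec\tau_3(G)$, where $(S',T')\in V_{\tau(G)}$ is the head of the arc in (i).
   Context: Graphs are finite, undirected, possibly with parallel edges, no loops; $X+a=X\cup\{a\}$, $X-a=X\setminus\{a\}$. A spanning tree is $T\subseteq E$ with $(V,T)$ connected and acyclic; bispanning means $E$ is the union of two disjoint spanning trees; atomic means the only bispanning subgraphs are the graph itself and single vertices. For a spanning tree $T$ of a graph $H$ and $e\notin T$, $C_H(T,e)$ is the edge set of the unique cycle in $T+e$; for $e\in T$, $D_H(T,e)$ is the set of edges of $H$ with one end in each component of $(V(H),T-e)$. For disjoint spanning trees $S,T$ covering all edges of $H$: $(e,f)$ with $e\in S,f\in T$ and $D_H(S,e)\cap C_H(T,e)=\{e,f\}$ is a unique $S$ edge exchange; $(e,f)$ with $e\in T,f\in S$ and $D_H(T,e)\cap C_H(S,e)=\{e,f\}$ is a unique $T$ edge exchange. $\vec\tau_3(H)$: vertex set $V_{\tau(H)}$ of ordered pairs $(S,T)$ of disjoint spanning trees covering all edges; an arc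 $(e,f,S,T)$ from $(S,T)$ to $(S-e+f,T+e-f)$ for each unique $S$ edge exchange and to $(S+e-f,T-e+f)$ for each unique $T$ edge exchange; $(e,f,P)$ with $P=(S,T)$ denotes $(e,f,S,T)$. The edge $e_w$ joins $v$ and $w$. The reduction graph $G_{a,b}$ has vertex set $V-v$ and edge set $E-e_x-e_y-e_z+e_{a,b}$, $e_{a,b}$ a new edge with ends $a,b$. $\rho_{e_{a,b},c}(S,T)=(S-e_{a,b}+e_a+e_b,T+e_c)$ if $e_{a,b}\in S$ and $=(S+e_c,T-e_{a,b}+e_a+e_b)$ if $e_{a,b}\in T$. *)

(* Multigraphs are represented inside ambient finite types:
   vertices of type V, edges of type E, and a global endpoint map
   ep : E -> V * V.  A graph is a pair (W : {set V}, F : {set E}). *)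
From mathcomp Require Import all_boot.
Set Implicit Arguments. Unset Strict Implicit. Unset Printing Implicit Defensive.

Section Graphs.
Variables (V E : finType) (ep : E -> V * V).

Definition joins (e : E) (u w : V) : bool :=
  (ep e == (u, w)) || (ep e == (w, u)).

Definition adj (F : {set E}) : rel V :=
  fun u w => [exists f in F, joins f u w].

Definition conn (F : {set E}) (u w : V) : bool := connect (adj F) u w.

Definition graph_wf (W : {set V}) (F : {set E}) : Prop :=
  forall e, e \in F -> [/\ (ep e).1 \in W, (ep e).2 \in W & (ep e).1 != (ep e).2].

Definition connected (W : {set V}) (F : {set E}) : Prop :=
  forall u w, u \in W -> w \in W -> conn F u w.

Definition acyclic (F : {set E}) : Prop :=
  forall e, e \in F -> ~~ conn (F :\ e) (ep e).1 (ep e).2.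

Definition spanning_tree (W : {set V}) (EH T : {set E}) : Prop :=
  [/\ T \subset EH, connected W T & acyclic T].

(* C_H(T,e) for e \notin T: e together with the edges of the unique T-path
   between the ends of e (f in T is on that path iff removing f separates
   the ends of e in T) *)
Definition Fcycle (T : {set E}) (e : E) : {set E} :=
  e |: [set f in T | ~~ conn (T :\ f) (ep e).1 (ep e).2].

Definition Dcut (EH T : {set E}) (e : E) : {set E} :=
  [set f in EH | ~~ conn (T :\ e) (ep f).1 (ep f).2].

Definition Vtau (W : {set V}) (EH : {set E}) (P : {set E} * {set E}) : Prop :=
  [/\ spanning_tree W EH P.1, spanning_tree W EH P.2,
      [disjoint P.1 & P.2] & P.1 :|: P.2 = EH].

Definition uniqS (EH : {set E}) (P : {set E} * {set E}) (e f : E) : Prop :=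
  [/\ e \in P.1, f \in P.2 & Dcut EH P.1 e :&: Fcycle P.2 e = [set e; f]].

Definition uniqT (EH : {set E}) (P : {set E} * {set E}) (e f : E) : Prop :=
  [/\ e \in P.2, f \in P.1 & Dcut EH P.2 e :&: Fcycle P.1 e = [set e; f]].

Definition is_arc (W : {set V}) (EH : {set E}) (e f : E)
    (P : {set E} * {set E}) : Prop :=
  Vtau W EH P /\ (uniqS EH P e f \/ uniqT EH P e f).

Definition arc_head (e f : E) (P : {set E} * {set E}) : {set E} * {set E} :=
  if e \in P.1 then (f |: (P.1 :\ e), e |: (P.2 :\ f))
  else (e |: (P.1 :\ f), f |: (P.2 :\ e)).

Definition bispanning (W : {set V}) (F : {set E}) : Prop :=
  exists P, Vtau W F P.

Definition subgraph (W : {set V}) (F : {set E}) (VG : {set V}) (EG : {set E}) : Prop :=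
  [/\ W \subset VG, F \subset EG &
      forall e, e \in F -> (ep e).1 \in W /\ (ep e).2 \in W].

Definition atomic (VG : {set V}) (EG : {set E}) : Prop :=
  forall W F, W != set0 -> subgraph W F VG EG -> bispanning W F ->
    (W = VG /\ F = EG) \/ (exists u, W = [set u] /\ F = set0).

Definition rho (eab ea eb ec : E) (P : {set E} * {set E}) : {set E} * {set E} :=
  if eab \in P.1 then (ea |: (eb |: (P.1 :\ eab)), ec |: P.2)
  else (ec |: P.1, ea |: (eb |: (P.2 :\ eab))).

End Graphs.

(* Write H for G_{a,b} and (Y, X) for the pair of trees of H with f in Y and
   e_{a,b} in X.  Since the three edges at v avoid H, rho turns X into the
   spanning tree X - e_{a,b} + e_a + e_b of G (the path a v b replaces e_{a,b})
   and Y into Y + e_c (a pendant edge at v).  Contracting v onto a neighbour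
   identifies connectivity in these lifted forests with connectivity in H.
   Hence the fundamental cycle of f in the lifted X is the old one with e_{a,b}
   replaced by e_a and e_b, while the cut of f in Y + e_c contains the same
   edges of H and exactly one of e_a, e_b, namely the one whose end a or b lies
   in the component of Y - f not containing c.  That edge e_2 makes (f, e_2) a
   unique exchange, and a unique exchange stays unique when reversed, because
   exchanging f and e_2 swaps the roles of fundamental cycle and cut. *)

From mathcomp Require Import all_boot.
Set Implicit Arguments. Unset Strict Implicit. Unset Printing Implicit Defensive.

Section Connectivity.
Context {V E : finType} {ep : E -> V * V}.
Local Notation conn := (conn ep).
Local Notation joins := (joins ep).
Implicit Types (F X Y : {set E}) (x y z t u w : V) (e g h : E).

Definition contract x t u := if u == x then t else u.

Definition avoids x F := forall e, e \in F -> ((ep e).1 != x) && ((ep e).2 != x).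

Lemma contract_x x t : contract x t x = t.
Proof. by rewrite /contract eqxx. Qed.

Lemma contract_t x t : contract x t t = t.
Proof. by rewrite /contract; case: ifP. Qed.

Lemma contract_id x t u : u != x -> contract x t u = u.
Proof. by rewrite /contract => /negPf ->. Qed.

Lemma joinsC e x y : joins e x y = joins e y x.
Proof. by rewrite /joins orbC. Qed.

Lemma joins_ends e : joins e (ep e).1 (ep e).2.
Proof. by rewrite /joins; case: (ep e) => ? ? /=; rewrite eqxx. Qed.

Lemma adjC F : symmetric (adj ep F).
Proof.
by move=> x y; apply/existsP/existsP => -[e /andP [He Hj]]; exists e; rewrite He joinsC.
Qed.

Lemma connC F x y : conn F x y = conn F y x.
Proof. exact: (sym_connect_sym (adjC F)). Qed.

Lemma conn0 F x : conn F x x.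
Proof. exact: connect0. Qed.

Lemma conn_trans F x y z : conn F x y -> conn F y z -> conn F x z.
Proof. exact: connect_trans. Qed.

Lemma conn_edge F e x y : e \in F -> joins e x y -> conn F x y.
Proof. by move=> He Hj; apply/connect1/existsP; exists e; rewrite He. Qed.

Lemma conn_joins F e x y : joins e x y -> conn F (ep e).1 (ep e).2 = conn F x y.
Proof. by case/orP => /eqP ->; rewrite // connC. Qed.

Lemma conn_covered (g : V -> V) F F' x y :
  (forall e, e \in F -> conn F' (g (ep e).1) (g (ep e).2)) ->
  conn F x y -> conn F' (g x) (g y).
Proof.
move=> HF /connectP [p]; elim: p x => [|z p IH] x /=.
  by move=> _ ->; exact: conn0.
case/andP => /existsP [e /andP [He Hj]] Hp Hy; apply: conn_trans (IH z Hp Hy).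
by have := HF e He; case/orP: Hj => /eqP -> //=; rewrite connC.
Qed.

Lemma conn_sub F F' x y : F \subset F' -> conn F x y -> conn F' x y.
Proof.
move=> /subsetP sFF'; apply: (@conn_covered id) => e /sFF' He.
exact: conn_edge He (joins_ends e).
Qed.

Lemma conn_setD1 F h x w : conn F x w ->
  [\/ conn (F :\ h) x w,
      conn (F :\ h) x (ep h).1 /\ conn (F :\ h) (ep h).2 w |
      conn (F :\ h) x (ep h).2 /\ conn (F :\ h) (ep h).1 w].
Proof.
move=> /connectP [p]; elim: p x => [|z p IH] x /=.
  by move=> _ ->; constructor 1; exact: conn0.
case/andP => /existsP [e /andP [He Hj]] Hp Hy; have := IH z Hp Hy.
have [Eeh|Neh] := eqVneq e h.
  subst e; case/orP: Hj => /eqP -> /=.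
  - by case=> [?|[? ?]|[? ?]]; [constructor 2|constructor 2|constructor 1]; rewrite ?conn0.
  - by case=> [?|[? ?]|[? ?]]; [constructor 3|constructor 1|constructor 3]; rewrite ?conn0.
have Hxz : conn (F :\ h) x z by apply: conn_edge Hj; rewrite !inE Neh.
by case=> [?|[? ?]|[? ?]]; [constructor 1|constructor 2|constructor 3];
  rewrite ?(conn_trans Hxz).
Qed.

Lemma conn_avoids F x y : avoids x F -> conn F x y -> x = y.
Proof.
move=> HF /connectP [[|z p]] /=; first by move=> _ ->.
case/andP => /existsP [e /andP [He Hj]] _ _.
by have := HF e He; case/orP: Hj => /eqP ->; rewrite eqxx ?andbF.
Qed.

(* A path of g |: Y joining the ends of h must use g; reroute it through h. *)
Lemma swap_conn Y g h : ~~ conn Y (ep h).1 (ep h).2 ->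
  conn (g |: Y) (ep h).1 (ep h).2 -> conn (h |: Y) (ep g).1 (ep g).2.
Proof.
have sY : (g |: Y) :\ g \subset h |: Y.
  by apply/subsetP => x; rewrite !inE => /andP [/negPf -> /= ->]; rewrite orbT.
have Hh : conn (h |: Y) (ep h).1 (ep h).2 by apply: conn_edge (joins_ends h); rewrite setU11.
move=> Nh /(conn_setD1 g) [H|[H1 H2]|[H1 H2]].
- by case/negP: Nh; apply: conn_sub H; apply/subsetP => x; rewrite !inE => /andP [/negPf ->].
- move: H1 H2 => /(conn_sub sY) H1 /(conn_sub sY) H2.
  by rewrite connC in H1; rewrite connC in H2; apply: conn_trans H1 (conn_trans Hh H2).
- move: H1 H2 => /(conn_sub sY) H1 /(conn_sub sY) H2.
  by rewrite connC in Hh; apply: conn_trans H2 (conn_trans Hh H1).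
Qed.

Lemma conn_contract F e x t u : e \in F -> joins e x t -> conn F u (contract x t u).
Proof.
by move=> He Hj; rewrite /contract; case: eqP => [->|_]; [exact: conn_edge Hj | exact: conn0].
Qed.

Lemma conn_pendantE F e x t u w : joins e x t -> avoids x F ->
  conn (e |: F) u w = conn F (contract x t u) (contract x t w).
Proof.
move=> Hj HF; apply/idP/idP => [|Huw].
  apply: conn_covered => f; rewrite in_setU1 => /orP [/eqP ->|Hf].
    by case/orP: Hj => /eqP -> /=; rewrite contract_x contract_t conn0.
  by case/andP: (HF f Hf) => ? ?; rewrite !contract_id //; exact: conn_edge Hf (joins_ends f).
have He := setU11 e F.
apply: conn_trans (conn_contract u He Hj) _; rewrite connC.
apply: conn_trans (conn_contract w He Hj) _; rewrite connC.
exact: conn_sub (subsetUr _ _) Huw.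
Qed.

End Connectivity.

Arguments avoids {V E} ep x F.

Section Trees.
Context {V E : finType} {ep : E -> V * V}.
Local Notation conn := (conn ep).
Implicit Types (F A B X Y : {set E}) (u w : V) (W : {set V}) (e f g h : E).

Lemma acyclic_sub X Y : Y \subset X -> acyclic ep X -> acyclic ep Y.
Proof.
move=> sYX HX e He; apply: contra (HX e (subsetP sYX e He)); apply: conn_sub.
exact: setSD.
Qed.

Lemma acyclic_setU1 X g : acyclic ep X -> ~~ conn X (ep g).1 (ep g).2 -> acyclic ep (g |: X).
Proof.
move=> HX Ng e; rewrite in_setU1; have [-> _|Neg /= He] := eqVneq e g.
  apply: contra Ng; apply: conn_sub.
  by apply/subsetP => x; rewrite !inE => /andP [/negPf -> /=].
apply/negP => He1; case/negP: Ng; rewrite -(setD1K He).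
apply: swap_conn (HX e He) _; apply: conn_sub He1.
by apply/subsetP => x; rewrite !inE => /andP [-> /orP [->|->]]; rewrite ?orbT.
Qed.

Lemma conn_setD1_same_side W X g u w : connected ep W X -> (ep g).1 \in W ->
  u \in W -> w \in W ->
  conn (X :\ g) (ep g).1 u = conn (X :\ g) (ep g).1 w -> conn (X :\ g) u w.
Proof.
move=> HX Hg Hu Hw.
have side z : z \in W -> conn (X :\ g) (ep g).1 z || conn (X :\ g) (ep g).2 z.
  by move=> Hz; case: (conn_setD1 g (HX _ _ Hg Hz)) => [->|[_ ->]|[_ ->]]; rewrite ?orbT.
have [Hgu|Ngu] := boolP (conn (X :\ g) (ep g).1 u) => Huw.
  by rewrite connC in Hgu; apply: conn_trans Hgu _; rewrite -Huw.
move: (side u Hu) (side w Hw); rewrite -Huw (negPf Ngu) /= => Hgu Hgw.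
by rewrite connC in Hgu; exact: conn_trans Hgu Hgw.
Qed.

Lemma conn_setD1_or W X g x y z : connected ep W X -> (ep g).1 \in W ->
  x \in W -> y \in W -> z \in W -> ~~ conn (X :\ g) x y ->
  conn (X :\ g) z x = ~~ conn (X :\ g) z y.
Proof.
move=> HX Hg Hx Hy Hz Nxy; apply/idP/idP => [Hzx|Nzy].
  by apply: contra Nxy; rewrite connC in Hzx; exact: conn_trans Hzx.
have same := conn_setD1_same_side HX Hg.
have Sxy := contraNneq (same x y Hx Hy) Nxy; have Szy := contraNneq (same z y Hz Hy) Nzy.
apply: same => //; move: Sxy Szy.
by case: (conn _ _ x); case: (conn _ _ y); case: (conn _ _ z).
Qed.

Lemma tree_exchange W F X g h : spanning_tree ep W F X -> g \in X -> h \in F ->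
  (ep h).1 \in W -> (ep h).2 \in W -> ~~ conn (X :\ g) (ep h).1 (ep h).2 ->
  spanning_tree ep W F (h |: (X :\ g)).
Proof.
move=> [sXF HXc HXa] Hg Hh Hh1 Hh2 Nh.
have Hgg : conn (h |: (X :\ g)) (ep g).1 (ep g).2.
  by apply: swap_conn Nh _; rewrite setD1K //; exact: HXc.
split.
- by rewrite subUset sub1set Hh (subset_trans (subD1set X g) sXF).
- move=> u w Hu Hw; apply: (@conn_covered _ _ _ id X) (HXc _ _ Hu Hw) => e He.
  have [->|Neg] := eqVneq e g; first exact: Hgg.
  by apply: conn_edge (joins_ends e); rewrite !inE Neg He orbT.
- by apply: acyclic_setU1 Nh; apply: acyclic_sub HXa; exact: subD1set.
Qed.

Lemma Fcycle_exchange A e f : acyclic ep A -> e \in A -> f \notin A ->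
  ~~ conn (A :\ e) (ep f).1 (ep f).2 ->
  Fcycle ep (f |: (A :\ e)) e = Fcycle ep A f.
Proof.
move=> HA He Hf Hn; apply/setP => x; rewrite /Fcycle !inE.
have [->|Nxe] /= := eqVneq x e; first by rewrite He Hn orbT.
have [->|Nxf] /= := eqVneq x f.
  apply: contra (HA e He); apply: conn_sub.
  by apply/subsetP => y; rewrite !inE => /andP [/negPf -> /=].
case Hx: (x \in A) => //=; congr negb.
set Y := A :\ e :\ x.
have NYf : ~~ conn Y (ep f).1 (ep f).2.
  by apply: contra Hn; apply: conn_sub; apply/subsetP => y; rewrite !inE => /and3P [_ -> ->].
have NYe : ~~ conn Y (ep e).1 (ep e).2.
  by apply: contra (HA e He); apply: conn_sub; apply/subsetP => y; rewrite !inE => /and3P [_ -> ->].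
apply/idP/idP => H.
- have sH : (f |: (A :\ e)) :\ x \subset f |: Y.
    by apply/subsetP => y; rewrite !inE => /andP [-> /orP [->|/andP [-> ->]]]; rewrite ?orbT.
  apply: conn_sub (swap_conn NYe (conn_sub sH H)).
  by apply/subsetP => y; rewrite !inE => /orP [/eqP ->|/and3P [-> _ ->]] //; rewrite eq_sym Nxe He.
- have sH : A :\ x \subset e |: Y.
    by apply/subsetP => y; rewrite !inE => /andP [-> ->]; rewrite andbT orbN.
  apply: conn_sub (swap_conn NYf (conn_sub sH H)).
  apply/subsetP => y; rewrite !inE => /orP [/eqP ->|/and3P [-> -> ->]]; last by rewrite orbT.
  by rewrite eqxx eq_sym Nxf.
Qed.

Lemma Fcycle_sub X f : Fcycle ep X f \subset f |: X.
Proof. by apply/subsetP => x; rewrite !inE => /orP [->|/andP [-> _]]; rewrite ?orbT. Qed.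

Lemma Vtau_swap W F A B : Vtau ep W F (A, B) -> Vtau ep W F (B, A).
Proof. by case=> /= TA TB dAB UAB; split; rewrite //= 1?disjoint_sym 1?setUC. Qed.

Lemma is_arc_swap W F e f A B : is_arc ep W F e f (A, B) -> is_arc ep W F e f (B, A).
Proof. by case=> HV H; split; [exact: Vtau_swap | case: H; [right|left]]. Qed.

Lemma is_arc_reverseT W F A B e f : graph_wf ep W F -> Vtau ep W F (A, B) ->
  uniqT ep F (A, B) e f -> is_arc ep W F f e (arc_head e f (A, B)).
Proof.
move=> Fwf [/= TA TB dAB UAB] [/= HeB HfA HI].
have HeA : e \notin A by rewrite (disjointFl dAB HeB).
have HfB : f \notin B by rewrite (disjointFr dAB HfA).
have Nef : e != f by apply: contraNneq HeA => ->.
have Nfe : f != e by rewrite eq_sym.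
have : f \in Dcut ep F B e :&: Fcycle ep A e by rewrite HI !inE eqxx orbT.
rewrite /Dcut /Fcycle !inE (negPf Nfe) HfA /= => /andP [/andP [HfF Nf] Ne].
have HeF : e \in F by rewrite -UAB inE HeB orbT.
have [He1 He2 _] := Fwf e HeF; have [Hf1 Hf2 _] := Fwf f HfF.
rewrite /arc_head /= (negPf HeA); split; [split => /= | right; split => /=].
- exact: tree_exchange.
- exact: tree_exchange.
- rewrite -setI_eq0; apply/eqP/setP => x; rewrite !inE.
  have [->|Nxe] := eqVneq x e; first by rewrite /= (negPf Nef).
  have [->|Nxf] := eqVneq x f; first by rewrite (negPf HfB) andbF.
  by case Hx: (x \in A); rewrite //= (disjointFr dAB Hx).
- apply/setP => x; rewrite -UAB !inE.
  have [->|Nxe] := eqVneq x e; first by rewrite HeB orbT.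
  by have [->|Nxf] := eqVneq x f; rewrite ?HfA ?orbT.
- by rewrite !inE eqxx.
- by rewrite !inE eqxx.
- have -> : Dcut ep F (f |: (B :\ e)) f = Dcut ep F B e.
    by rewrite /Dcut setU1K // !inE negb_and HfB orbT.
  by rewrite Fcycle_exchange //; [rewrite HI setUC | case: TA].
Qed.

Lemma is_arc_reverse W F e f P : graph_wf ep W F ->
  is_arc ep W F e f P -> is_arc ep W F f e (arc_head e f P).
Proof.
case: P => A B Fwf [HV [HS|HT]]; last exact: is_arc_reverseT.
have [/= HeA _ _] := HS; have [_ _ dAB _] := HV.
have := is_arc_reverseT Fwf (Vtau_swap HV) HS.
by rewrite /arc_head /= HeA (disjointFr dAB HeA); exact: is_arc_swap.
Qed.

End Trees.

Section Reduction.
Context {V E : finType} {ep : E -> V * V} {VG : {set V}} {EG : {set E}}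
  {v a b c : V} {ea eb ec eab : E}.
Hypotheses (Gwf : graph_wf ep VG EG)
  (ea_eb : ea != eb) (ea_ec : ea != ec) (eb_ec : eb != ec)
  (ea_va : joins ep ea v a) (eb_vb : joins ep eb v b) (ec_vc : joins ep ec v c)
  (star_v : [set e in EG | ((ep e).1 == v) || ((ep e).2 == v)] = [set ea; eb; ec])
  (eab_EG : eab \notin EG) (eab_ab : joins ep eab a b).

Local Notation conn := (conn ep).
(* (W', EH) is the reduction graph G_{a,b}. *)
Local Notation W' := (VG :\ v).
Local Notation EH := (eab |: (EG :\: [set ea; eb; ec])).
Implicit Types (X Y Z : {set E}) (t u w : V) (e f x : E).

Definition split_ab Z := ea |: (eb |: (Z :\ eab)).

Lemma star_EG e : e \in [set ea; eb; ec] -> e \in EG.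
Proof. by rewrite -star_v inE => /andP []. Qed.

Lemma ea_EG : ea \in EG. Proof. by apply: star_EG; rewrite !inE eqxx. Qed.
Lemma eb_EG : eb \in EG. Proof. by apply: star_EG; rewrite !inE eqxx orbT. Qed.
Lemma ec_EG : ec \in EG. Proof. by apply: star_EG; rewrite !inE eqxx !orbT. Qed.

Lemma end_W' e t : e \in EG -> joins ep e v t -> t \in W'.
Proof.
move=> He; have [H1 H2 Hne] := Gwf He; rewrite in_setD1.
by case/orP => /eqP Ee; move: H1 H2 Hne; rewrite Ee /= => H1 H2 Hne;
  rewrite ?H1 ?H2 andbT // eq_sym.
Qed.

Lemma a_W' : a \in W'. Proof. exact: end_W' ea_EG ea_va. Qed.
Lemma b_W' : b \in W'. Proof. exact: end_W' eb_EG eb_vb. Qed.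
Lemma c_W' : c \in W'. Proof. exact: end_W' ec_EG ec_vc. Qed.

Lemma W'_neq_v u : u \in W' -> u != v.
Proof. by rewrite in_setD1 => /andP []. Qed.

Lemma contract_W' t u : t \in W' -> u \in VG -> contract v t u \in W'.
Proof. by move=> Ht Hu; rewrite /contract; case: eqP => // /eqP Nu; rewrite in_setD1 Nu. Qed.

Lemma EH_EG e : e \in EH -> e != eab -> e \in EG.
Proof. by rewrite in_setU1 in_setD => /orP [/eqP -> /eqP //|/andP [_ ->]]. Qed.

Lemma star_notin_EH e : e \in [set ea; eb; ec] -> e \notin EH.
Proof.
move=> He; rewrite in_setU1 in_setD He /= orbF.
by apply: contraNneq eab_EG => <-; exact: star_EG.
Qed.

Lemma EH_avoids : avoids ep v EH.
Proof.
move=> e; rewrite in_setU1 in_setD => /orP [/eqP ->|/andP [Ne He]].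
  by case/orP: eab_ab => /eqP -> /=; rewrite !W'_neq_v ?a_W' ?b_W'.
by move: Ne; rewrite -star_v inE He /= negb_or.
Qed.

Lemma avoids_v Z : Z \subset EH -> avoids ep v Z.
Proof. by move=> sZ e He; apply: EH_avoids; exact: (subsetP sZ). Qed.

Lemma star_notin Z e : Z \subset EH -> e \in [set ea; eb; ec] -> e \notin Z.
Proof. by move=> sZ /star_notin_EH; apply: contra; exact: (subsetP sZ). Qed.

Lemma v_disconnected Z t : Z \subset EH -> t \in W' -> ~~ conn Z v t.
Proof.
move=> sZ Ht; apply/negP => /(conn_avoids (avoids_v sZ)) Evt.
by move: (W'_neq_v Ht); rewrite -Evt eqxx.
Qed.

Lemma conn_split_abE Z u w : Z \subset EH -> eab \in Z ->
  conn (split_ab Z) u w = conn Z (contract v a u) (contract v a w).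
Proof.
move=> sZ HeabZ; have av := W'_neq_v a_W'; have bv := W'_neq_v b_W'.
apply/idP/idP => Huw.
  apply: conn_covered Huw => e; rewrite /split_ab !inE => /or3P [/eqP ->|/eqP ->|/andP [_ He]].
  - by case/orP: ea_va => /eqP -> /=; rewrite contract_x contract_t conn0.
  - have Hab : conn Z a b by apply: conn_edge HeabZ eab_ab.
    by case/orP: eb_vb => /eqP -> /=; rewrite contract_x contract_id // connC.
  - case/andP: (avoids_v sZ He) => ? ?; rewrite !contract_id //.
    exact: conn_edge He (joins_ends e).
have Hea : ea \in split_ab Z by rewrite setU11.
have lift (p q : V) : conn Z p q -> conn (split_ab Z) p q.
  apply: (@conn_covered _ _ _ id) => e He /=; have [->|Ne] := eqVneq e eab.
    rewrite (conn_joins _ eab_ab); apply: (conn_trans (y := v)).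
      by apply: conn_edge Hea _; rewrite joinsC.
    by apply: conn_edge eb_vb; rewrite !inE eqxx orbT.
  by apply: conn_edge (joins_ends e); rewrite !inE Ne He !orbT.
apply: conn_trans (conn_contract u Hea ea_va) _; rewrite connC.
by apply: conn_trans (conn_contract w Hea ea_va) _; rewrite connC; exact: lift.
Qed.

Lemma split_ab_tree X : spanning_tree ep W' EH X -> eab \in X ->
  spanning_tree ep VG EG (split_ab X).
Proof.
move=> [sX HXc HXa] HeabX.
have sXab : X :\ eab \subset EH := subset_trans (subD1set X eab) sX.
split.
- apply/subsetP => e; rewrite /split_ab !inE => /or3P [/eqP ->|/eqP ->|/andP [Ne He]].
  + exact: ea_EG.
  + exact: eb_EG.
  + exact: EH_EG (subsetP sX e He) Ne.
- by move=> u w Hu Hw; rewrite conn_split_abE //; apply: HXc; exact: contract_W' a_W' _.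
- rewrite /split_ab; apply: acyclic_setU1.
    apply: acyclic_setU1; first exact: acyclic_sub (subD1set X eab) HXa.
    by rewrite (conn_joins _ eb_vb); exact: v_disconnected b_W'.
  rewrite (conn_joins _ ea_va) (conn_pendantE _ _ eb_vb (avoids_v sXab)).
  rewrite contract_x contract_id ?W'_neq_v ?a_W' // connC -(conn_joins _ eab_ab).
  exact: HXa.
Qed.

Lemma add_ec_tree Y : spanning_tree ep W' EH Y -> eab \notin Y ->
  spanning_tree ep VG EG (ec |: Y).
Proof.
move=> [sY HYc HYa] HeabY; split.
- rewrite subUset sub1set ec_EG; apply/subsetP => e He.
  by apply: EH_EG (subsetP sY e He) _; apply: contraNneq HeabY => <-.
- move=> u w Hu Hw; rewrite (conn_pendantE _ _ ec_vc (avoids_v sY)).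
  by apply: HYc; exact: contract_W' c_W' _.
- apply: acyclic_setU1 => //; rewrite (conn_joins _ ec_vc); exact: v_disconnected c_W'.
Qed.

Lemma rho_Vtau X Y : Vtau ep W' EH (Y, X) -> eab \in X ->
  Vtau ep VG EG (ec |: Y, split_ab X).
Proof.
move=> [/= TY TX dYX UYX] HeabX; have [sY _ _] := TY; have [sX _ _] := TX.
have HeabY : eab \notin Y by rewrite (disjointFl dYX HeabX).
split => /=; [exact: add_ec_tree | exact: split_ab_tree | |].
- have [naY nbY ncX] : [/\ ea \notin Y, eb \notin Y & ec \notin X].
    by split; apply: star_notin; rewrite // !inE eqxx ?orbT.
  rewrite -setI_eq0; apply/eqP/setP => x; rewrite /split_ab !inE.
  have [->|Na] := eqVneq x ea; first by rewrite (negPf ea_ec) (negPf naY).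
  have [->|Nb] := eqVneq x eb; first by rewrite (negPf eb_ec) (negPf nbY).
  have [->|Nc] := eqVneq x ec; first by rewrite (negPf ncX) andbF.
  by case Hx: (x \in Y); rewrite //= (disjointFr dYX Hx) andbF.
- apply/setP => x; rewrite /split_ab !inE.
  have [->|Na] := eqVneq x ea; first by rewrite ea_EG !orbT.
  have [->|Nb] := eqVneq x eb; first by rewrite eb_EG !orbT.
  have [->|Nc] := eqVneq x ec; first by rewrite ec_EG.
  have [->|Ne] := eqVneq x eab; first by rewrite (negPf HeabY) (negPf eab_EG).
  have := congr1 (fun S : {set E} => x \in S) UYX.
  by rewrite !inE (negPf Na) (negPf Nb) (negPf Nc) (negPf Ne) /= => ->.
Qed.

Lemma split_ab_setD1 Z x : x \in EH -> x != eab -> split_ab Z :\ x = split_ab (Z :\ x).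
Proof.
move=> Hx Nx; have [Na Nb] : x != ea /\ x != eb.
  by split; apply: contraTneq Hx => ->; apply: star_notin_EH; rewrite !inE eqxx ?orbT.
apply/setP => y; rewrite /split_ab !inE.
by have [->|_] := eqVneq y x; rewrite /= ?andbT // (negPf Na) (negPf Nb) andbF.
Qed.

Lemma split_ab_setD1_ea Z : Z \subset EH -> split_ab Z :\ ea = eb |: (Z :\ eab).
Proof.
move=> sZ; rewrite /split_ab setU1K // !inE negb_or ea_eb /=.
by rewrite negb_and (star_notin sZ) ?orbT // !inE eqxx.
Qed.

Lemma split_ab_setD1_eb Z : Z \subset EH -> split_ab Z :\ eb = ea |: (Z :\ eab).
Proof.
move=> sZ; rewrite /split_ab setUCA setU1K // !inE negb_or eq_sym ea_eb /=.
by rewrite negb_and (star_notin sZ) ?orbT // !inE eqxx orbT.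
Qed.

Lemma Fcycle_split_ab X f : X \subset EH -> f \in EH -> f \notin X -> eab \in X ->
  ~~ conn (X :\ eab) (ep f).1 (ep f).2 ->
  Fcycle ep (split_ab X) f = ea |: (eb |: (Fcycle ep X f :\ eab)).
Proof.
move=> sX HfH HfX HeabX NX; have /andP [f1 f2] := EH_avoids HfH.
have sXab : X :\ eab \subset EH := subset_trans (subD1set X eab) sX.
have Nfe : f != eab by apply: contraNneq HfX => ->.
apply/setP => x; rewrite /Fcycle !inE.
have [->|Nxf] /= := eqVneq x f; first by rewrite andbT Nfe !orbT.
have [->|Na] /= := eqVneq x ea.
  by rewrite split_ab_setD1_ea // (conn_pendantE _ _ eb_vb (avoids_v sXab)) !contract_id.
have [->|Nb] /= := eqVneq x eb.
  by rewrite split_ab_setD1_eb // (conn_pendantE _ _ ea_va (avoids_v sXab)) !contract_id.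
have [->|Ne] //= := eqVneq x eab.
case Hx: (x \in X) => //=.
have HeabXx : eab \in X :\ x by rewrite in_setD1 eq_sym Ne HeabX.
rewrite split_ab_setD1 ?(subsetP sX) // conn_split_abE ?(subset_trans (subD1set X x)) //.
by rewrite !contract_id.
Qed.

Lemma Dcut_add_ec Y f x : Y \subset EH -> f \in Y ->
  (x \in Dcut ep EG (ec |: Y) f) =
  (x \in EG) && ~~ conn (Y :\ f) (contract v c (ep x).1) (contract v c (ep x).2).
Proof.
move=> sY HfY; rewrite /Dcut.
have Nfc : f != ec by apply: contraTneq HfY => ->; rewrite star_notin // !inE eqxx !orbT.
have -> : (ec |: Y) :\ f = ec |: (Y :\ f).
  by apply/setP => y; rewrite !inE; have [->|] //= := eqVneq y ec; rewrite andbT eq_sym.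
by rewrite inE (conn_pendantE _ _ ec_vc (avoids_v (subset_trans (subD1set Y f) sY))).
Qed.

Lemma Dcut_add_ec_star Y f e t : Y \subset EH -> f \in Y -> e \in EG ->
  joins ep e v t -> t != v -> (e \in Dcut ep EG (ec |: Y) f) = ~~ conn (Y :\ f) c t.
Proof.
move=> sY HfY He Hj Nt; rewrite Dcut_add_ec // He.
by case/orP: Hj => /eqP -> /=; rewrite contract_x contract_id // connC.
Qed.

Lemma Dcut_Fcycle_lift X Y f : Vtau ep W' EH (Y, X) -> uniqS ep EH (Y, X) f eab ->
  Dcut ep EG (ec |: Y) f :&: Fcycle ep (split_ab X) f =
  [set f; if conn (Y :\ f) c a then eb else ea].
Proof.
move=> [/= TY TX dYX UYX] [/= HfY HeabX HI]; have [sY HYc _] := TY; have [sX _ _] := TX.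
have HfH : f \in EH by rewrite -UYX inE HfY.
have HfX : f \notin X by rewrite (disjointFr dYX HfY).
have Nfe : f != eab by apply: contraNneq HfX => ->.
have Neabf : eab != f by rewrite eq_sym.
have /andP [Nab NX] : ~~ conn (Y :\ f) a b && ~~ conn (X :\ eab) (ep f).1 (ep f).2.
  have : eab \in Dcut ep EH Y f :&: Fcycle ep X f by rewrite HI !inE eqxx orbT.
  by rewrite /Dcut /Fcycle !inE eqxx (negPf Neabf) HeabX (conn_joins _ eab_ab).
have Hf1 : (ep f).1 \in W'.
  by rewrite in_setD1; have [-> _ _] := Gwf (EH_EG HfH Nfe); case/andP: (EH_avoids HfH) => ->.
have ca_cb := conn_setD1_or HYc Hf1 a_W' b_W' c_W' Nab.
rewrite Fcycle_split_ab //; apply/setP => x.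
rewrite in_set2 in_setI in_setU1 in_setU1 in_setD1.
have [Naf Nbf] : ea != f /\ eb != f.
  by split; apply: contraTneq HfH => <-; apply: star_notin_EH; rewrite !inE eqxx ?orbT.
have [->|Na] := eqVneq x ea.
  rewrite (Dcut_add_ec_star sY HfY ea_EG ea_va (W'_neq_v a_W')) (negPf Naf) /=.
  by case: ifP; rewrite ?eqxx // (negPf ea_eb).
have [->|Nb] := eqVneq x eb.
  rewrite (Dcut_add_ec_star sY HfY eb_EG eb_vb (W'_neq_v b_W')) (negPf Nbf) /=.
  by rewrite -ca_cb; case: ifP; rewrite ?eqxx // eq_sym (negPf ea_eb).
have -> : (x == (if conn (Y :\ f) c a then eb else ea)) = false.
  by case: ifP => _; apply: negbTE.
have [->|Ne] := eqVneq x eab; first by rewrite andbF (negPf Neabf).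
have sFH : Fcycle ep X f \subset EH.
  by rewrite (subset_trans (Fcycle_sub X f)) // subUset sub1set HfH.
case HxH: (x \in EH); last first.
  rewrite (contraFF (subsetP sFH x) HxH) /= andbF orbF; apply/esym; apply: negbTE.
  by apply: contraFneq HxH => ->.
rewrite Dcut_add_ec // (EH_EG HxH Ne).
case/andP: (EH_avoids HxH) => N1 N2; rewrite !contract_id //.
have := congr1 (fun S : {set E} => x \in S) HI.
by rewrite in_setI in_set2 (negPf Ne) orbF /Dcut inE HxH.
Qed.

Lemma lift_uniqS X Y f : Vtau ep W' EH (Y, X) -> uniqS ep EH (Y, X) f eab ->
  exists e2, (e2 = ea \/ e2 = eb) /\ is_arc ep VG EG f e2 (ec |: Y, split_ab X).
Proof.
move=> HV Hu; have [/= HfY HeabX _] := Hu.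
exists (if conn (Y :\ f) c a then eb else ea); split; first by case: ifP; [right|left].
split; first exact: rho_Vtau.
left; split => /=; first by rewrite in_setU1 HfY orbT.
  by rewrite /split_ab; case: ifP; rewrite !inE eqxx ?orbT.
exact: Dcut_Fcycle_lift.
Qed.

Lemma lift_arc f P : is_arc ep W' EH f eab P ->
  exists e2, (e2 = ea \/ e2 = eb) /\ is_arc ep VG EG f e2 (rho eab ea eb ec P).
Proof.
case: P => S T [HV [Hu|Hu]].
  have [_ HeabT _] := Hu; have [_ _ dST _] := HV.
  by rewrite /rho /= (disjointFl dST HeabT); exact: lift_uniqS.
have [_ HeabS _] := Hu; have [e2 [He2 Harc]] := lift_uniqS (Vtau_swap HV) Hu.
by exists e2; split => //; rewrite /rho /= HeabS; exact: is_arc_swap.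
Qed.

End Reduction.

Theorem mainTheorem15 (V E : finType) (ep : E -> V * V)
  (VG : {set V}) (EG : {set E}) (v a b c : V) (ea eb ec eab f : E)
  (P : {set E} * {set E}) :
  graph_wf ep VG EG ->
  bispanning ep VG EG ->
  atomic ep VG EG ->
  v \in VG ->
  [/\ a != b, a != c & b != c] ->
  [/\ ea != eb, ea != ec & eb != ec] ->
  [/\ joins ep ea v a, joins ep eb v b & joins ep ec v c] ->
  [set e in EG | ((ep e).1 == v) || ((ep e).2 == v)] = [set ea; eb; ec] ->
  eab \notin EG ->
  joins ep eab a b ->
  is_arc ep (VG :\ v) (eab |: (EG :\: [set ea; eb; ec])) f eab P ->
  exists e2, (e2 = ea \/ e2 = eb) /\
    is_arc ep VG EG f e2 (rho eab ea eb ec P) /\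
    is_arc ep VG EG e2 f (arc_head f e2 (rho eab ea eb ec P)).
Proof.
move=> Gwf _ _ _ _ [ea_eb ea_ec eb_ec] [ea_va eb_vb ec_vc] star_v eab_EG eab_ab arc.
have [e2 [He2 arc2]] :=
  lift_arc Gwf ea_eb ea_ec eb_ec ea_va eb_vb ec_vc star_v eab_EG eab_ab arc.
by exists e2; split => //; split => //; exact: is_arc_reverse.
Qed.
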